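(* Let $(\mathcal{M},\times,1)$ be a cartesian monoidal category with equivalences. Then there is an isomorphism of categories \[ \mathrm{HtyAlg}(\mathbf{Mon},\mathcal{M})\;\cong\;\mathbf{Special}((\Delta^+)^{\mathrm{op}},\mathcal{M}). \]
   Context: A monoidal category with equivalences is a monoidal category with a class of morphisms (equivalences) containing all isomorphisms, satisfying two-out-of-three for composition, and closed under $\otimes$; cartesian means the monoidal structure is given by chosen finite products. $\Delta$: objects $n=\{0,\dots,n-1\}$ ($n\ge0$), order-preserving maps, monoidal under ordinal sum $+$ with unit $0$. $\mathrm{HtyAlg}(\mathbf{Mon},\mathcal{M})$ (homotopy monoids in $\mathcal{M}$) is the category whose objects are colax monoidal functors $(X,\xi):(\Delta,+,0)\to(\mathcal{M},\times,1)$ (functor $X$ with natural, not necessarily invertible maps $\xi_{m,n}:X(m+n)\to X(m)\times X(n)$, $\xi_0:X(0)\to1$ satisfying coassociativity and counit axioms) with $\xi_0$ and all $\xi_{m,n}$ equivalences, and whose morphisms are monoidal transformations. $\Delta^+$: objects $[n]=\{0,\dots,n\}$, order-preserving maps. A special simplicial object in $\mathcal{M}$ is a functor $Y:(\Delta^+)^{\mathrm{op}}\to\mathcal{M}$ such that for each $n\ge0$ the map $(Y(\beta^n_0),\dots,Y(\beta^n_{n-1})):Y[n]\to Y[1]^n$ is an equivalence, where $\beta^n_j:[1]\to[n]$, $\beta^n_j(i)=i+j$ (equivalently, the maps $(Y(\alpha^1_{m,n}),Y(\alpha^2_{m,n})):Y[m+n]\to Y[m]\times Y[n]$ with $\alpha^1_{m,n}(i)=i$,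 $\alpha^2_{m,n}(i)=m+i$, and $Y[0]\to1$ are equivalences). $\mathbf{Special}((\Delta^+)^{\mathrm{op}},\mathcal{M})$ is the category of special simplicial objects and natural transformations. *)

From Stdlib Require Import ProofIrrelevance FunctionalExtensionality.
From HB Require Import structures.
From mathcomp Require Import all_boot.
From mathcomp Require Import zify.

Set Implicit Arguments.
Unset Strict Implicit.
Unset Printing Implicit Defensive.

Record Category := {
  ob :> Type;
  hom : ob -> ob -> Type;
  idm : forall a, hom a a;
  comp : forall a b c, hom b c -> hom a b -> hom a c;
  comp_id_l : forall a b (f : hom a b), comp (idm b) f = f;
  comp_id_r : forall a b (f : hom a b), comp f (idm a) = f;
  comp_assoc : forall a b c d (h : hom c d) (g : hom b c) (f : hom a b),
      comp h (comp g f) = comp (comp h g) f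
}.
Arguments hom {_}.
Arguments idm {_}.
Arguments comp {_ _ _ _}.

Record Functor (C D : Category) := {
  fob :> C -> D;
  fmap : forall a b, hom a b -> hom (fob a) (fob b);
  fmap_id : forall a, fmap (idm a) = idm (fob a);
  fmap_comp : forall a b c (g : hom b c) (f : hom a b),
      fmap (comp g f) = comp (fmap g) (fmap f)
}.
Arguments fmap {C D} _ {a b}.

Definition idF_fmap (C : Category) (a b : C) (f : hom a b) : hom a b := f.
Program Definition idF (C : Category) : Functor C C :=
  {| fob := fun a => a; fmap := @idF_fmap C |}.

Program Definition compF (C D E : Category) (G : Functor D E) (F : Functor C D)
  : Functor C E :=
  {| fob := fun a => G (F a); fmap := fun a b f => fmap G (fmap F f) |}.
Next Obligation. by rewrite !fmap_id. Qed.
Next Obligation. by rewrite !fmap_comp. Qed.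

Definition hom_cast (C : Category) (a b a' b' : C) (ea : a = a') (eb : b = b')
  (f : hom a b) : hom a' b' :=
  match ea in _ = x, eb in _ = y return hom x y with erefl, erefl => f end.

Definition functor_eq (C D : Category) (F G : Functor C D) : Prop :=
  exists e : forall x, F x = G x,
    forall a b (f : hom a b), hom_cast (e a) (e b) (fmap F f) = fmap G f.

Definition iso_of_categories (C D : Category) : Prop :=
  exists (F : Functor C D) (G : Functor D C),
    functor_eq (compF G F) (idF C) /\ functor_eq (compF F G) (idF D).

Program Definition opCat (C : Category) : Category :=
  {| ob := ob C; hom := fun a b => @hom C b a; idm := fun a => @idm C a;
     comp := fun a b c g f => comp f g |}.
Next Obligation. exact: comp_id_r. Qed.
Next Obligation. exact: comp_id_l. Qed.
Next Obligation. by rewrite comp_assoc. Qed.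

Definition is_iso (C : Category) (a b : C) (f : hom a b) : Prop :=
  exists g : hom b a, comp g f = idm a /\ comp f g = idm b.

Record CartCat := {
  ccat :> Category;
  one : ccat;
  bang : forall a : ccat, hom a one;
  bang_uniq : forall a (f : hom a one), f = bang a;
  prod : ccat -> ccat -> ccat;
  p1 : forall a b : ccat, hom (prod a b) a;
  p2 : forall a b : ccat, hom (prod a b) b;
  pair : forall c a b : ccat, hom c a -> hom c b -> hom c (prod a b);
  pair_p1 : forall c a b (f : hom c a) (g : hom c b), comp (p1 a b) (pair f g) = f;
  pair_p2 : forall c a b (f : hom c a) (g : hom c b), comp (p2 a b) (pair f g) = g;
  pair_uniq : forall c a b (h : hom c (prod a b)),
      h = pair (comp (p1 a b) h) (comp (p2 a b) h)
}.
Arguments one {_}.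
Arguments bang {_}.
Arguments prod {_}.
Arguments p1 {_}.
Arguments p2 {_}.
Arguments pair {_ _ _ _}.

Section CartOps.
Variable M : CartCat.

Definition tensor (a b a' b' : M) (f : hom a a') (g : hom b b')
  : hom (prod a b) (prod a' b') :=
  pair (comp f (p1 a b)) (comp g (p2 a b)).

Definition assoc (a b c : M) : hom (prod (prod a b) c) (prod a (prod b c)) :=
  pair (comp (p1 a b) (p1 _ c)) (pair (comp (p2 a b) (p1 _ c)) (p2 _ c)).

Definition lunit_inv (a : M) : hom a (prod one a) := pair (bang a) (idm a).
Definition runit_inv (a : M) : hom a (prod a one) := pair (idm a) (bang a).

Fixpoint pow (a : M) (n : nat) : M :=
  match n with 0 => one | n'.+1 => prod a (pow a n') end.

Fixpoint tuple_map (b a : M) (n : nat) : ('I_n -> hom b a) -> hom b (pow a n) :=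
  match n return ('I_n -> hom b a) -> hom b (pow a n) with
  | 0 => fun _ => bang b
  | n'.+1 => fun fs => pair (fs ord0) (@tuple_map b a n' (fun i => fs (lift ord0 i)))
  end.
End CartOps.

Record CartEqCat := {
  cartcat :> CartCat;
  equiv : forall a b : cartcat, hom a b -> Prop;
  equiv_iso : forall a b (f : hom a b), is_iso f -> equiv f;
  equiv_2of3_comp : forall a b c (f : hom a b) (g : hom b c),
      equiv f -> equiv g -> equiv (comp g f);
  equiv_2of3_left : forall a b c (f : hom a b) (g : hom b c),
      equiv f -> equiv (comp g f) -> equiv g;
  equiv_2of3_right : forall a b c (f : hom a b) (g : hom b c),
      equiv g -> equiv (comp g f) -> equiv f;
  equiv_tensor : forall a b a' b' (f : hom a a') (g : hom b b'),
      equiv f -> equiv g -> equiv (tensor f g)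
}.
Arguments equiv {_ _ _}.

Definition monob (m n : nat) (f : {ffun 'I_m -> 'I_n}) : bool :=
  [forall i : 'I_m, forall j : 'I_m, (i <= j) ==> (f i <= f j)].

Definition DHom (m n : nat) := {f : {ffun 'I_m -> 'I_n} | monob f}.

Lemma monob_id n : monob [ffun i : 'I_n => i].
Proof. by apply/forallP => i; apply/forallP => j; rewrite !ffunE; apply/implyP. Qed.

Definition did (n : nat) : DHom n n := exist (fun f => monob f) _ (monob_id n).

Lemma monob_comp l m n (g : DHom m n) (f : DHom l m) :
  monob [ffun i => sval g (sval f i)].
Proof.
case: g => g /= /forallP hg; case: f => f /= /forallP hf.
apply/forallP => i; apply/forallP => j; rewrite !ffunE; apply/implyP => hij.
have := forallP (hf i) j; rewrite hij /= => hfij.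
by have := forallP (hg (f i)) (f j); rewrite hfij.
Qed.

Definition dcomp l m n (g : DHom m n) (f : DHom l m) : DHom l n :=
  exist (fun f => monob f) _ (monob_comp g f).

Lemma DHom_ext m n (f g : DHom m n) : (forall i, sval f i = sval g i) -> f = g.
Proof. by move=> h; apply: val_inj; apply/ffunP. Qed.

Program Definition Delta : Category :=
  {| ob := nat; hom := DHom; idm := did; comp := dcomp |}.
Next Obligation. by apply: DHom_ext => i /=; rewrite !ffunE. Qed.
Next Obligation. by apply: DHom_ext => i /=; rewrite !ffunE. Qed.
Next Obligation. by apply: DHom_ext => i /=; rewrite !ffunE. Qed.

(* Delta^+ : the object n stands for [n] = {0..n}; morphisms are the
   order-preserving maps [m] -> [n] *)
Program Definition DeltaPlus : Category :=
  {| ob := nat; hom := fun m n => DHom m.+1 n.+1;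
     idm := fun n => did n.+1; comp := fun l m n g f => dcomp g f |}.
Next Obligation. by apply: DHom_ext => i /=; rewrite !ffunE. Qed.
Next Obligation. by apply: DHom_ext => i /=; rewrite !ffunE. Qed.
Next Obligation. by apply: DHom_ext => i /=; rewrite !ffunE. Qed.

Definition dsum_fun m n m' n' (f : DHom m n) (g : DHom m' n') (i : 'I_(m + m'))
  : 'I_(n + n') :=
  match split i with
  | inl j => lshift n' (sval f j)
  | inr k => rshift n (sval g k)
  end.

Lemma monob_dsum m n m' n' (f : DHom m n) (g : DHom m' n') :
  monob [ffun i => dsum_fun f g i].
Proof.
case: f => f hf0; case: g => g hg0.
have /forallP hf := hf0; have /forallP hg := hg0.
apply/forallP => i; apply/forallP => j; rewrite !ffunE /dsum_fun /=; apply/implyP.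
case: splitP => [i' ei|i' ei]; case: splitP => [j' ej|j' ej] /=;
  rewrite ei ej => hij.
- by have := forallP (hf i') j'; rewrite hij.
- by rewrite (leq_trans (ltnW (ltn_ord _))) ?leq_addr.
- by move: hij; have := ltn_ord j'; lia.
- have := forallP (hg i') j'; rewrite leq_add2l in hij; rewrite hij /=.
  by rewrite leq_add2l.
Qed.

Definition dsum m n m' n' (f : DHom m n) (g : DHom m' n') : DHom (m + m') (n + n') :=
  exist (fun f => monob f) _ (monob_dsum f g).

(* the identity-on-elements morphism m -> n for m = n (used to compare
   X(m) and X(n) for propositionally equal m, n) *)
Lemma monob_cast m n (e : m = n) : monob [ffun i => cast_ord e i].
Proof. by apply/forallP => i; apply/forallP => j; rewrite !ffunE; apply/implyP. Qed.

Definition dcast m n (e : m = n) : DHom m n := exist (fun f => monob f) _ (monob_cast e).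

Lemma monob_beta n (j : 'I_n) : monob [ffun i : 'I_2 => (inord (i + j) : 'I_n.+1)].
Proof.
apply/forallP => i; apply/forallP => i'; rewrite !ffunE; apply/implyP => h.
have hi := ltn_ord i; have hi' := ltn_ord i'; have hj := ltn_ord j.
rewrite !inordK; lia.
Qed.

Definition beta n (j : 'I_n) : @hom DeltaPlus 1 n := exist (fun f => monob f) _ (monob_beta j).

Lemma comp_pair (M : CartCat) (d c a b : M) (f : hom c a) (g : hom c b) (h : hom d c) :
  comp (pair f g) h = pair (comp f h) (comp g h).
Proof.
rewrite [LHS]pair_uniq !comp_assoc pair_p1 pair_p2 //.
Qed.

Lemma tensor_comp (M : CartCat) (a b a' b' a'' b'' : M)
  (f : hom a' a'') (g : hom b' b'') (f' : hom a a') (g' : hom b b') :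
  comp (tensor f g) (tensor f' g') = tensor (comp f f') (comp g g').
Proof.
rewrite /tensor comp_pair -!comp_assoc pair_p1 pair_p2.
by rewrite !comp_assoc.
Qed.

(* HtyAlg(Mon, M): colax monoidal functors (Delta,+,0) -> (M,x,1) whose  *)
(* structure maps are equivalences, and monoidal transformations         *)

Section HtyAlg.
Variable M : CartEqCat.

Record HtyObj := {
  hX : Functor Delta M;
  xi : forall m n : nat, hom (hX (m + n)) (prod (hX m) (hX n));
  xi0 : hom (hX 0) one;
  xi_nat : forall m n m' n' (f : DHom m n) (g : DHom m' n'),
      comp (xi n n') (fmap hX (dsum f g : @hom Delta _ _))
      = comp (tensor (fmap hX (f : @hom Delta _ _)) (fmap hX (g : @hom Delta _ _)))
             (xi m m');
  (* coassociativity (the canonical identification (l+m)+n = l+(m+n) in Delta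
     is inserted explicitly) *)
  xi_coassoc : forall l m n,
      comp (assoc _ _ _) (comp (tensor (xi l m) (idm _)) (xi (l + m) n))
      = comp (tensor (idm _) (xi m n))
             (comp (xi l (m + n)) (fmap hX (dcast (esym (addnA l m n)) : @hom Delta _ _)));
  xi_counit_l : forall n,
      comp (tensor xi0 (idm (hX n))) (xi 0 n) = lunit_inv (hX n);
  xi_counit_r : forall n,
      comp (tensor (idm (hX n)) xi0) (xi n 0)
      = comp (runit_inv (hX n)) (fmap hX (dcast (addn0 n) : @hom Delta _ _));
  xi0_equiv : equiv xi0;
  xi_equiv : forall m n, equiv (xi m n)
}.

Record HtyHom (X Y : HtyObj) := {
  th : forall n : nat, hom (hX X n) (hX Y n);
  th_nat : forall m n (f : DHom m n),
      comp (th n) (fmap (hX X) (f : @hom Delta _ _))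
      = comp (fmap (hX Y) (f : @hom Delta _ _)) (th m);
  th_mon : forall m n,
      comp (xi Y m n) (th (m + n)) = comp (tensor (th m) (th n)) (xi X m n);
  th_mon0 : comp (xi0 Y) (th 0) = xi0 X
}.

Lemma HtyHom_ext X Y (s t : HtyHom X Y) : (forall n, th s n = th t n) -> s = t.
Proof.
case: s => s sn sm s0; case: t => t tn tm t0 /= e.
have ee : s = t by apply: functional_extensionality_dep.
subst t; f_equal; apply: proof_irrelevance.
Qed.

Program Definition hty_id (X : HtyObj) : HtyHom X X :=
  {| th := fun n => idm (hX X n) |}.
Next Obligation. by rewrite comp_id_l comp_id_r. Qed.
Next Obligation.
rewrite comp_id_r /tensor !comp_id_l -[LHS]comp_id_l.
by rewrite [idm _ in LHS]pair_uniq !comp_id_r.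
Qed.
Next Obligation. by rewrite comp_id_r. Qed.

Program Definition hty_comp (X Y Z : HtyObj) (t : HtyHom Y Z) (s : HtyHom X Y)
  : HtyHom X Z := {| th := fun n => comp (th t n) (th s n) |}.
Next Obligation.
by rewrite -comp_assoc th_nat !comp_assoc th_nat.
Qed.
Next Obligation.
by rewrite comp_assoc th_mon -comp_assoc th_mon comp_assoc tensor_comp.
Qed.
Next Obligation. by rewrite comp_assoc !th_mon0. Qed.

Program Definition HtyAlg : Category :=
  {| ob := HtyObj; hom := HtyHom; idm := hty_id; comp := hty_comp |}.
Next Obligation. by apply: HtyHom_ext => n /=; rewrite comp_id_l. Qed.
Next Obligation. by apply: HtyHom_ext => n /=; rewrite comp_id_r. Qed.
Next Obligation. by apply: HtyHom_ext => n /=; rewrite comp_assoc. Qed.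

End HtyAlg.

Section Special.
Variable M : CartEqCat.

Definition segal_map (Y : Functor (opCat DeltaPlus) M) (n : nat)
  : hom (Y n) (pow (Y 1) n) :=
  tuple_map (fun j : 'I_n => fmap Y (beta j : @hom (opCat DeltaPlus) n 1)).

Record SpObj := {
  sY : Functor (opCat DeltaPlus) M;
  special : forall n : nat, equiv (segal_map sY n)
}.

Record SpHom (X Y : SpObj) := {
  sth : forall n : nat, hom (sY X n) (sY Y n);
  sth_nat : forall m n (f : @hom (opCat DeltaPlus) m n),
      comp (sth n) (fmap (sY X) f) = comp (fmap (sY Y) f) (sth m)
}.

Lemma SpHom_ext X Y (s t : SpHom X Y) : (forall n, sth s n = sth t n) -> s = t.
Proof.
case: s => s sn; case: t => t tn /= e.
have ee : s = t by apply: functional_extensionality_dep.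
subst t; f_equal; apply: proof_irrelevance.
Qed.

Program Definition sp_id (X : SpObj) : SpHom X X :=
  {| sth := fun n => idm (sY X n) |}.
Next Obligation. by rewrite comp_id_l comp_id_r. Qed.

Program Definition sp_comp (X Y Z : SpObj) (t : SpHom Y Z) (s : SpHom X Y)
  : SpHom X Z := {| sth := fun n => comp (sth t n) (sth s n) |}.
Next Obligation.
by rewrite -comp_assoc sth_nat !comp_assoc sth_nat.
Qed.

Program Definition Special : Category :=
  {| ob := SpObj; hom := SpHom; idm := sp_id; comp := sp_comp |}.
Next Obligation. by apply: SpHom_ext => n /=; rewrite comp_id_l. Qed.
Next Obligation. by apply: SpHom_ext => n /=; rewrite comp_id_r. Qed.
Next Obligation. by apply: SpHom_ext => n /=; rewrite comp_assoc. Qed.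

End Special.

From Stdlib Require Import ProofIrrelevance FunctionalExtensionality JMeq.
From mathcomp Require Import all_boot.
From mathcomp Require Import zify.

Set Implicit Arguments.
Unset Strict Implicit.
Unset Printing Implicit Defensive.

(* Joyal duality: a map f : m -> n of Delta corresponds to the endpoint-preserving
   map [n] -> [m] of Delta^+ sending j to #{i | f i < j}.  Hence a special
   simplicial object Y restricts to a functor on Delta, whose comultiplication
   (Y alpha^1, Y alpha^2) is an equivalence by 2-out-of-3 from the Segal maps.
   Conversely, every g : [b] -> [a] is the dual of the Delta-map
   flat g : a -> 1 + (b + 1), i |-> #{j | g j <= i}, followed by the inclusion
   of [b] as the middle part of [b + 2]; so a homotopy monoid X acts by
   X(flat g) followed by the middle projection X(1 + (b + 1)) -> X(b) built
   from xi.  Coassociativity and the counit laws make this functorial, and the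
   two constructions are strictly inverse to each other. *)

(** * Maps of Delta as functions on nat *)

(* [dapp f] is [f] read as a function on [nat]; its value outside [0, m) is junk. *)
Definition dapp m n (f : DHom m n) (i : nat) : nat :=
  odflt 0 (omap (fun k : 'I_m => val (sval f k)) (insub i)).

Lemma dapp_val m n (f : DHom m n) (i : 'I_m) : val (sval f i) = dapp f i.
Proof. by rewrite /dapp valK. Qed.

Lemma dapp_ord m n (f : DHom m n) i (lt_im : i < m) :
  dapp f i = val (sval f (Ordinal lt_im)).
Proof. by rewrite dapp_val. Qed.

Lemma DHom_dapp_ext m n (f g : DHom m n) :
  (forall i, i < m -> dapp f i = dapp g i) -> f = g.
Proof. by move=> efg; apply: DHom_ext => i; apply/val_inj; rewrite !dapp_val efg. Qed.

Lemma dapp_lt m n (f : DHom m n) i : i < m -> dapp f i < n.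
Proof. by move=> lt_im; rewrite (dapp_ord _ lt_im) ltn_ord. Qed.

Lemma dapp_mono m n (f : DHom m n) i j : i <= j -> j < m -> dapp f i <= dapp f j.
Proof.
move=> le_ij lt_jm; have lt_im : i < m by apply: leq_ltn_trans lt_jm.
rewrite (dapp_ord _ lt_im) (dapp_ord _ lt_jm); case: f => f /= /forallP f_mono.
by have := forallP (f_mono (Ordinal lt_im)) (Ordinal lt_jm); rewrite /= le_ij.
Qed.

Section OfFun.
Variables (m n : nat) (phi : nat -> nat).
Hypothesis phi_lt : forall i, i < m -> phi i < n.
Hypothesis phi_mono : forall i j, i <= j -> j < m -> phi i <= phi j.

Lemma monob_of_fun : monob [ffun i : 'I_m => Ordinal (phi_lt (ltn_ord i))].
Proof.
apply/forallP => i; apply/forallP => j; rewrite !ffunE; apply/implyP => le_ij /=.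
exact: phi_mono.
Qed.

Definition dhom_of_fun : DHom m n := exist (fun f => monob f) _ monob_of_fun.

Lemma dapp_of_fun i : i < m -> dapp dhom_of_fun i = phi i.
Proof. by move=> lt_im; rewrite (dapp_ord _ lt_im) /= ffunE. Qed.
End OfFun.

Lemma dapp_dcomp l m n (g : DHom m n) (f : DHom l m) i :
  i < l -> dapp (dcomp g f) i = dapp g (dapp f i).
Proof. by move=> lt_il; rewrite (dapp_ord _ lt_il) /= ffunE dapp_val (dapp_ord _ lt_il). Qed.

Lemma dapp_did n i : i < n -> dapp (did n) i = i.
Proof. by move=> lt_in; rewrite (dapp_ord _ lt_in) /= ffunE. Qed.

Lemma dapp_dcast m n (e : m = n) i : i < m -> dapp (dcast e) i = i.
Proof. by move=> lt_im; rewrite (dapp_ord _ lt_im) /= ffunE. Qed.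

Lemma dapp_dsum m n m' n' (f : DHom m n) (g : DHom m' n') i : i < m + m' ->
  dapp (dsum f g) i = if i < m then dapp f i else n + dapp g (i - m).
Proof.
move=> lt_i; rewrite (dapp_ord _ lt_i) /= ffunE /dsum_fun.
case: splitP => [j /= ->|j /= ->].
- by rewrite ltn_ord /= dapp_val.
- by rewrite ltnNge leq_addr /= addKn dapp_val.
Qed.

Lemma dcast_id n (e : n = n) : dcast e = did n.
Proof. by apply: DHom_dapp_ext => i lt_in; rewrite dapp_dcast // dapp_did. Qed.


Lemma sumb_leq m (P : nat -> bool) : \sum_(i < m) P i <= m.
Proof.
elim: m => [|m IH]; first by rewrite big_ord0.
by rewrite big_ord_recr /= -addn1 leq_add // leq_b1.
Qed.

Lemma sumb_initial m (P : nat -> bool) t :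
  (forall i, i < m -> P i = (i < t)) -> \sum_(i < m) P i = minn t m.
Proof.
elim: m => [|m IH] P_init; first by rewrite big_ord0; lia.
rewrite big_ord_recr /= IH ?P_init //; last by move=> i lt_im; apply: P_init; lia.
by case: (ltnP m t) => /=; lia.
Qed.

Lemma eq_sumb m (P Q : nat -> bool) :
  (forall i, i < m -> P i = Q i) -> \sum_(i < m) P i = \sum_(i < m) Q i.
Proof. by move=> ePQ; apply: eq_bigr => i _; rewrite ePQ. Qed.

Lemma leq_sumb m (P Q : nat -> bool) :
  (forall i, i < m -> P i -> Q i) -> \sum_(i < m) P i <= \sum_(i < m) Q i.
Proof.
move=> PQ; apply: leq_sum => i _; case Pi: (P i) => //.
by rewrite (PQ i (ltn_ord i) Pi).
Qed.

Lemma ltn_sumb m (P : nat -> bool) :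
  (forall i j, i <= j -> j < m -> P j -> P i) ->
  forall k, k < m -> (k < \sum_(i < m) P i) = P k.
Proof.
elim: m => [|m IH] P_down k lt_km //.
have P_down' : forall i j, i <= j -> j < m -> P j -> P i.
  by move=> i j ? ? ?; apply: (P_down i j) => //; lia.
rewrite big_ord_recr /=; case Pm: (P m).
- have -> : \sum_(i < m) P i = m.
    rewrite (@sumb_initial _ _ m) ?minnn // => i lt_im.
    by rewrite lt_im; apply: (P_down i m) => //; lia.
  rewrite addn1 ltnS; have -> : k <= m by lia.
  by symmetry; apply: (P_down k m) => //; lia.
- rewrite addn0; case: (ltnP k m) => [lt_km'|le_mk]; first exact: IH.
  have -> : k = m by lia.
  by rewrite Pm ltnNge sumb_leq.
Qed.

(** * Joyal duality and flattening *)

Definition ddual_fun m n (f : DHom m n) (j : nat) := \sum_(i < m) (dapp f i < j).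

Lemma ddual_fun_lt m n (f : DHom m n) j : j < n.+1 -> ddual_fun f j < m.+1.
Proof. by move=> _; rewrite ltnS; apply: (sumb_leq m (fun i => dapp f i < j)). Qed.

Lemma ddual_fun_mono m n (f : DHom m n) i j :
  i <= j -> j < n.+1 -> ddual_fun f i <= ddual_fun f j.
Proof.
move=> le_ij _; apply: (leq_sumb (P := fun k => dapp f k < i) (Q := fun k => dapp f k < j)).
by move=> k _ /leq_trans; apply.
Qed.

Definition ddual m n (f : DHom m n) : DHom n.+1 m.+1 :=
  dhom_of_fun (@ddual_fun_lt m n f) (@ddual_fun_mono m n f).

Lemma dapp_ddual m n (f : DHom m n) j : j < n.+1 -> dapp (ddual f) j = ddual_fun f j.
Proof. exact: dapp_of_fun. Qed.

Lemma ltn_ddual_fun m n (f : DHom m n) j k :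
  k < m -> (k < ddual_fun f j) = (dapp f k < j).
Proof.
move=> lt_km; rewrite /ddual_fun (@ltn_sumb m (fun i => dapp f i < j)) //.
by move=> i i' le_ii' lt_i'm; apply: leq_ltn_trans; apply: dapp_mono.
Qed.

Definition flat_fun m n (g : DHom m.+1 n.+1) (i : nat) := \sum_(j < m.+1) (dapp g j <= i).

Lemma flat_fun_le m n (g : DHom m.+1 n.+1) i : flat_fun g i <= m.+1.
Proof. exact: (sumb_leq m.+1 (fun j => dapp g j <= i)). Qed.

Lemma flat_fun_lt m n (g : DHom m.+1 n.+1) i : i < n -> flat_fun g i < 1 + (m + 1).
Proof. by move=> _; rewrite add1n addn1 ltnS; apply: flat_fun_le. Qed.

Lemma flat_fun_mono m n (g : DHom m.+1 n.+1) i j :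
  i <= j -> j < n -> flat_fun g i <= flat_fun g j.
Proof.
move=> le_ij _; apply: (leq_sumb (P := fun k => dapp g k <= i) (Q := fun k => dapp g k <= j)).
by move=> k _ /leq_trans; apply.
Qed.

(* [g : [m] -> [n]] is recovered from the dual of [flat g] (see [ddual_flat]). *)
Definition flat m n (g : DHom m.+1 n.+1) : DHom n (1 + (m + 1)) :=
  dhom_of_fun (@flat_fun_lt m n g) (@flat_fun_mono m n g).

Lemma dapp_flat m n (g : DHom m.+1 n.+1) i : i < n -> dapp (flat g) i = flat_fun g i.
Proof. exact: dapp_of_fun. Qed.

Lemma ltn_flat_fun m n (g : DHom m.+1 n.+1) i k :
  k < m.+1 -> (k < flat_fun g i) = (dapp g k <= i).
Proof.
move=> lt_km; rewrite /flat_fun (@ltn_sumb m.+1 (fun j => dapp g j <= i)) //.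
by move=> a b le_ab lt_bm; apply: leq_trans; apply: dapp_mono.
Qed.

Lemma alpha1_lt m n i : i < m.+1 -> i < (m + n).+1.
Proof. lia. Qed.

Definition alpha1 m n : DHom m.+1 (m + n).+1 :=
  dhom_of_fun (phi := id) (@alpha1_lt m n) (fun i j le_ij _ => le_ij).

Lemma alpha2_lt m n i : i < n.+1 -> m + i < (m + n).+1.
Proof. lia. Qed.

Definition alpha2 m n : DHom n.+1 (m + n).+1 :=
  dhom_of_fun (@alpha2_lt m n) (fun i j le_ij _ => leq_add (leqnn m) le_ij).

Definition dconst0 a : DHom a 1 :=
  dhom_of_fun (phi := fun _ => 0) (fun _ _ => ltn0Sn 0) (fun _ _ _ _ => leqnn 0).

Lemma dapp_alpha1 m n i : i < m.+1 -> dapp (alpha1 m n) i = i.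
Proof. exact: dapp_of_fun. Qed.

Lemma dapp_alpha2 m n i : i < n.+1 -> dapp (alpha2 m n) i = m + i.
Proof. exact: dapp_of_fun. Qed.

Lemma dapp_dconst0 a i : i < a -> dapp (dconst0 a) i = 0.
Proof. exact: dapp_of_fun. Qed.

Lemma sumb_split m m' (P : nat -> bool) :
  \sum_(i < m + m') P i = \sum_(i < m) P i + \sum_(i < m') P (m + i).
Proof. by rewrite big_split_ord. Qed.

Lemma ddual_did n : ddual (did n) = did n.+1.
Proof.
apply: DHom_dapp_ext => j lt_jn; rewrite dapp_ddual // dapp_did // /ddual_fun.
rewrite (@sumb_initial n (fun i => dapp (did n) i < j) j); first lia.
by move=> i lt_in; rewrite dapp_did.
Qed.

Lemma ddual_dcomp l m n (g : DHom m n) (f : DHom l m) :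
  ddual (dcomp g f) = dcomp (ddual f) (ddual g).
Proof.
apply: DHom_dapp_ext => j lt_jn; rewrite dapp_dcomp // !dapp_ddual //; last exact: ddual_fun_lt.
apply: (eq_sumb (P := fun i => dapp (dcomp g f) i < j) (Q := fun i => dapp f i < ddual_fun g j)).
by move=> i lt_il; rewrite dapp_dcomp // ltn_ddual_fun //; apply: dapp_lt.
Qed.

Lemma ddual_dcast m n (e : m = n) j : j < n.+1 -> dapp (ddual (dcast e)) j = j.
Proof.
move=> lt_jn; rewrite dapp_ddual // /ddual_fun.
rewrite (@sumb_initial m (fun i => dapp (dcast e) i < j) j); first lia.
by move=> i lt_im; rewrite dapp_dcast.
Qed.

Lemma ddual_dsum_alpha1 m n m' n' (f : DHom m n) (g : DHom m' n') :
  dcomp (ddual (dsum f g)) (alpha1 n n') = dcomp (alpha1 m m') (ddual f).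
Proof.
apply: DHom_dapp_ext => j lt_jn.
rewrite !dapp_dcomp // dapp_alpha1 // dapp_ddual ?dapp_alpha1 //; last lia.
rewrite dapp_ddual // /ddual_fun (sumb_split m m' (fun i => dapp (dsum f g) i < j)).
rewrite [X in _ + X](@sumb_initial _ (fun i => dapp (dsum f g) (m + i) < j) 0) ?min0n ?addn0.
- apply: (eq_sumb (P := fun i => dapp (dsum f g) i < j) (Q := fun i => dapp f i < j)).
  by move=> i lt_im; rewrite dapp_dsum ?lt_im //; lia.
- move=> i lt_im'; rewrite dapp_dsum; last lia.
  by rewrite [m + i < m]ltnNge leq_addr /=; lia.
- exact: dapp_lt.
Qed.

Lemma ddual_dsum_alpha2 m n m' n' (f : DHom m n) (g : DHom m' n') :
  dcomp (ddual (dsum f g)) (alpha2 n n') = dcomp (alpha2 m m') (ddual g).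
Proof.
apply: DHom_dapp_ext => j lt_jn'.
rewrite !dapp_dcomp // dapp_alpha2 // dapp_ddual ?dapp_alpha2 //; try lia;
  last exact: dapp_lt.
rewrite dapp_ddual // /ddual_fun (sumb_split m m' (fun i => dapp (dsum f g) i < n + j)).
rewrite [X in X + _](@sumb_initial _ (fun i => dapp (dsum f g) i < n + j) m) ?minnn.
- congr (_ + _).
  apply: (eq_sumb (P := fun i => dapp (dsum f g) (m + i) < n + j) (Q := fun i => dapp g i < j)).
  move=> i lt_im'; rewrite dapp_dsum; last lia.
  by rewrite [m + i < m]ltnNge leq_addr /= addKn ltn_add2l.
- by move=> i lt_im; rewrite dapp_dsum ?lt_im; have := dapp_lt f lt_im; lia.
Qed.

Lemma alpha2_0n n : alpha2 0 n = did n.+1.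
Proof. by apply: DHom_dapp_ext => i lt_in; rewrite dapp_alpha2 // dapp_did. Qed.

Lemma alpha1_n0 n : alpha1 n 0 = ddual (dcast (addn0 n)).
Proof. by apply: DHom_dapp_ext => i lt_in; rewrite dapp_alpha1 // ddual_dcast. Qed.

Lemma dapp_beta n (j : 'I_n) i : i < 2 -> dapp (beta j) i = i + j.
Proof. by move=> lt_i2; rewrite (dapp_ord _ lt_i2) /= ffunE inordK //=; have := ltn_ord j; lia. Qed.

Lemma beta_ord0 n : beta (ord0 : 'I_n.+1) = alpha1 1 n.
Proof. by apply: DHom_dapp_ext => i lt_i2; rewrite dapp_beta // dapp_alpha1 // addn0. Qed.

Lemma beta_lift n (j : 'I_n) : beta (lift ord0 j) = dcomp (alpha2 1 n) (beta j).
Proof.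
apply: DHom_dapp_ext => i lt_i2; rewrite dapp_dcomp // dapp_beta // (@dapp_alpha2 1 n).
  by rewrite dapp_beta //= /bump /=; lia.
by rewrite dapp_beta //; have := ltn_ord j; lia.
Qed.

Lemma dcast_addn0K a : dcomp (dcast (addn0 a)) (dcast (esym (addn0 a))) = did a.
Proof.
by apply: DHom_dapp_ext => i lt_ia; rewrite dapp_dcomp ?addn0 // ?dapp_dcast ?dapp_did ?addn0.
Qed.

Lemma did_addn0_split m n : did (m + n) =
  dcomp (dsum (did m) (dcast (addn0 n))) (dsum (did m) (dcast (esym (addn0 n)))).
Proof.
apply: DHom_dapp_ext => i lt_i; rewrite dapp_did // dapp_dcomp //.
have -> : dapp (dsum (did m) (dcast (esym (addn0 n)))) i = i.
  by rewrite dapp_dsum //; case: ifP => lt_im; [rewrite dapp_did | rewrite dapp_dcast]; lia.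
by rewrite dapp_dsum //; case: (ltnP i m) => [lt_im|le_mi]; rewrite ?dapp_did ?dapp_dcast; lia.
Qed.

(* Merges the two leading and the two trailing points of its domain. *)
Definition dcollapse c : DHom ((1 + 1) + ((c + 1) + 1)) (1 + (c + 1)) :=
  dcomp (dsum (did 1) (dcomp (dsum (did c) (dconst0 (1 + 1))) (dcast (esym (addnA c 1 1)))))
        (dsum (dconst0 (1 + 1)) (did ((c + 1) + 1))).

Lemma dapp_dcollapse c y : y < (1 + 1) + ((c + 1) + 1) ->
  dapp (dcollapse c) y = if y < 2 then 0 else 1 + minn (y - 2) c.
Proof.
move=> lt_y; rewrite /dcollapse dapp_dcomp // [dapp (dsum (dconst0 _) _) y]dapp_dsum //.
case: (ltnP y 2) => [lt_y2|le_2y].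
- by rewrite dapp_dconst0 // dapp_dsum // dapp_did.
- rewrite dapp_did; last lia.
  rewrite dapp_dsum; last lia.
  have -> : (1 + (y - (1 + 1)) < 1) = false by lia.
  rewrite dapp_dcomp; last lia.
  rewrite dapp_dcast; last lia.
  by rewrite dapp_dsum; [case: ifP => lt_yc; rewrite ?dapp_did ?dapp_dconst0|]; lia.
Qed.

Lemma flat_did a :
  flat (did a.+1) = dcomp (dsum (dconst0 0) (dsum (did a) (dconst0 0))) (dcast (esym (addn0 a))).
Proof.
apply: DHom_dapp_ext => i lt_ia.
rewrite dapp_flat // dapp_dcomp // dapp_dcast // dapp_dsum /=; last lia.
rewrite dapp_dsum; last lia.
rewrite subn0 lt_ia dapp_did // /flat_fun.
rewrite (@sumb_initial a.+1 (fun j => dapp (did a.+1) j <= i) i.+1); first lia.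
by move=> j lt_ja; rewrite dapp_did.
Qed.

Lemma flat_dcomp a b c (f : DHom b.+1 a.+1) (g : DHom c.+1 b.+1) :
  flat (dcomp f g) =
  dcomp (dcollapse c) (dcomp (dsum (did 1) (dsum (flat g) (did 1))) (flat f)).
Proof.
apply: DHom_dapp_ext => i lt_ia.
rewrite dapp_flat // (dapp_dcomp (dcollapse c)) // (dapp_dcomp (dsum (did 1) _) (flat f)) //.
rewrite dapp_flat //; have := flat_fun_le f i; set y := flat_fun f i => le_yb.
have -> : flat_fun (dcomp f g) i = \sum_(k < c.+1) (dapp g k < y).
  apply: (eq_sumb (P := fun k => dapp (dcomp f g) k <= i) (Q := fun k => dapp g k < y)).
  by move=> k lt_kc; rewrite dapp_dcomp // /y ltn_flat_fun //; apply: dapp_lt.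
rewrite dapp_dsum; last lia.
case: (ltnP y 1) => [lt_y1|le_1y].
- rewrite dapp_did // dapp_dcollapse; last lia.
  rewrite (@sumb_initial c.+1 (fun k => dapp g k < y) 0) ?min0n; last by move=> k _; lia.
  by case: ifP; lia.
- rewrite (dapp_dsum (flat g) (did 1)); last lia.
  case: (ltnP (y - 1) b) => [lt_yb|le_by].
  + rewrite dapp_flat // dapp_dcollapse; last by have := flat_fun_le g (y - 1); lia.
    have := flat_fun_le g (y - 1).
    have -> : flat_fun g (y - 1) = \sum_(k < c.+1) (dapp g k < y).
      by apply: (eq_sumb (P := fun k => dapp g k <= y - 1) (Q := fun k => dapp g k < y)); lia.
    by case: ifP; lia.
  + rewrite dapp_did; last lia.
    rewrite dapp_dcollapse; last lia.
    have -> : (1 + (1 + (c + 1) + (y - 1 - b)) < 2) = false by lia.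
    rewrite (@sumb_initial c.+1 (fun k => dapp g k < y) c.+1); first lia.
    by move=> k lt_kc; rewrite lt_kc; have := dapp_lt g lt_kc; lia.
Qed.

Lemma flat_ddual m n (f : DHom m n) : flat (ddual f) = dcomp (flat (did n.+1)) f.
Proof.
apply: DHom_dapp_ext => i lt_im; rewrite dapp_flat // dapp_dcomp // dapp_flat; last exact: dapp_lt.
apply: (eq_sumb (P := fun j => dapp (ddual f) j <= i)
                (Q := fun j => dapp (did n.+1) j <= dapp f i)).
by move=> j lt_jn; rewrite dapp_ddual // dapp_did // leqNgt ltn_ddual_fun //; lia.
Qed.

Lemma flat_alpha1 m n :
  flat (alpha1 m n) = (dsum (dconst0 0) (dsum (did m) (dconst0 n)) : DHom (m + n) _).
Proof.
apply: DHom_dapp_ext => i lt_i.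
rewrite dapp_flat // (dapp_dsum (dconst0 0) (dsum (did m) (dconst0 n))) //= dapp_dsum ?subn0 //.
rewrite /flat_fun (@sumb_initial m.+1 (fun j => dapp (alpha1 m n) j <= i) i.+1).
  by case: ifP => lt_im; [rewrite dapp_did | rewrite dapp_dconst0]; lia.
by move=> j lt_jm; rewrite dapp_alpha1.
Qed.

Lemma flat_alpha2 m n : flat (alpha2 m n) =
  dcomp (dsum (dconst0 m) (dsum (did n) (dconst0 0))) (dsum (did m) (dcast (esym (addn0 n)))).
Proof.
apply: DHom_dapp_ext => i lt_i; rewrite dapp_flat // dapp_dcomp //.
have -> : dapp (dsum (did m) (dcast (esym (addn0 n)))) i = i.
  by rewrite dapp_dsum //; case: ifP => lt_im; [rewrite dapp_did | rewrite dapp_dcast]; lia.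
rewrite dapp_dsum; last lia.
case: (ltnP i m) => [lt_im|le_mi].
- rewrite dapp_dconst0 // /flat_fun.
  rewrite (@sumb_initial n.+1 (fun j => dapp (alpha2 m n) j <= i) 0) ?min0n //.
  by move=> j lt_jn; rewrite dapp_alpha2 //; lia.
- rewrite dapp_dsum; last lia.
  have lt_imn : i - m < n by lia.
  rewrite lt_imn dapp_did //.
  rewrite /flat_fun (@sumb_initial n.+1 (fun j => dapp (alpha2 m n) j <= i) (i - m).+1); first lia.
  by move=> j lt_jn; rewrite dapp_alpha2 //; lia.
Qed.

Lemma ddual_flat a b (g : DHom b.+1 a.+1) :
  dcomp (dcomp (ddual (flat g)) (alpha2 1 (b + 1))) (alpha1 b 1) = g.
Proof.
apply: DHom_dapp_ext => j lt_jb; rewrite dapp_dcomp // dapp_dcomp ?dapp_alpha1 //; last lia.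
rewrite (@dapp_alpha2 1 (b + 1)); last lia.
rewrite dapp_ddual; last lia.
rewrite /ddual_fun (@sumb_initial a (fun i => dapp (flat g) i < 1 + j) (dapp g j)).
  by have := dapp_lt g lt_jb; lia.
by move=> i lt_ia; rewrite dapp_flat // add1n ltnS leqNgt ltn_flat_fun //; lia.
Qed.

(** * Chosen finite products *)

Section Cartesian.
Variable M : CartCat.
Implicit Types a b c d : M.

Lemma comp_assocr a b c d (h : hom c d) (g : hom b c) (f : hom a b) :
  comp (comp h g) f = comp h (comp g f).
Proof. by rewrite comp_assoc. Qed.

Lemma pair_p1_comp a b c d (f : hom c a) (g : hom c b) (k : hom d c) :
  comp (p1 a b) (comp (pair f g) k) = comp f k.
Proof. by rewrite comp_assoc pair_p1. Qed.

Lemma pair_p2_comp a b c d (f : hom c a) (g : hom c b) (k : hom d c) :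
  comp (p2 a b) (comp (pair f g) k) = comp g k.
Proof. by rewrite comp_assoc pair_p2. Qed.

Lemma tensor_p1_comp a b a' b' d (f : hom a a') (g : hom b b') (k : hom d (prod a b)) :
  comp (p1 _ _) (comp (tensor f g) k) = comp f (comp (p1 _ _) k).
Proof. by rewrite /tensor pair_p1_comp comp_assocr. Qed.

Lemma tensor_p2_comp a b a' b' d (f : hom a a') (g : hom b b') (k : hom d (prod a b)) :
  comp (p2 _ _) (comp (tensor f g) k) = comp g (comp (p2 _ _) k).
Proof. by rewrite /tensor pair_p2_comp comp_assocr. Qed.

Lemma assoc_p1_comp a b c d (k : hom d (prod (prod a b) c)) :
  comp (p1 _ _) (comp (assoc a b c) k) = comp (p1 a b) (comp (p1 _ c) k).
Proof. by rewrite /assoc pair_p1_comp comp_assocr. Qed.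

Lemma assoc_p2_comp a b c d (k : hom d (prod (prod a b) c)) :
  comp (p2 _ _) (comp (assoc a b c) k) =
  comp (pair (comp (p2 a b) (p1 _ c)) (p2 _ c)) k.
Proof. by rewrite /assoc pair_p2_comp. Qed.

Lemma tensor_pair a b a' b' c (f : hom a a') (g : hom b b') (u : hom c a) (v : hom c b) :
  comp (tensor f g) (pair u v) = pair (comp f u) (comp g v).
Proof. by rewrite /tensor comp_pair -!comp_assoc pair_p1 pair_p2. Qed.

Lemma pair_ext c a b (h h' : hom c (prod a b)) :
  comp (p1 _ _) h = comp (p1 _ _) h' -> comp (p2 _ _) h = comp (p2 _ _) h' -> h = h'.
Proof. by move=> e1 e2; rewrite [h]pair_uniq [h']pair_uniq e1 e2. Qed.

Lemma bang_comp a b (h : hom a b) : comp (bang b) h = bang a.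
Proof. exact: bang_uniq. Qed.

Lemma iso_idm a : is_iso (idm a).
Proof. by exists (idm a); rewrite comp_id_l. Qed.

Lemma tuple_map_comp (b b' a : M) n (fs : 'I_n -> hom b a) (h : hom b' b) :
  comp (tuple_map fs) h = tuple_map (fun i => comp (fs i) h).
Proof.
elim: n fs => [|n IH] fs /=; first exact: bang_comp.
by rewrite comp_pair IH.
Qed.

End Cartesian.

Ltac cart_simpl := repeat progress rewrite ?comp_id_l ?comp_id_r ?comp_assocr
  ?comp_pair ?pair_p1 ?pair_p2 ?pair_p1_comp ?pair_p2_comp.

Lemma assoc_iso (M : CartCat) (a b c : M) : is_iso (assoc a b c).
Proof.
exists (pair (pair (p1 _ _) (comp (p1 _ _) (p2 _ _))) (comp (p2 _ _) (p2 _ _))); split.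
- by rewrite /assoc; apply: pair_ext; [apply: pair_ext|]; cart_simpl.
- by rewrite /assoc; apply: pair_ext; [|apply: pair_ext]; cart_simpl.
Qed.

Lemma lunit_inv_iso (M : CartCat) (a : M) : is_iso (lunit_inv a).
Proof.
exists (p2 _ _); split; first by rewrite /lunit_inv pair_p2.
rewrite /lunit_inv; apply: pair_ext; cart_simpl => //.
by rewrite bang_comp; symmetry; apply: bang_uniq.
Qed.

(** * From homotopy monoids to special simplicial objects *)

Section HomotopyMonoid.
Variables (M : CartEqCat) (X : HtyObj M).
Local Notation Xm f := (fmap (hX X) (f : @hom Delta _ _)).
Local Notation x := (xi X).

Lemma Xm_comp_r l m n d (f : DHom m n) (g : DHom l m) (k : hom d _) :
  comp (Xm f) (comp (Xm g) k) = comp (Xm (dcomp f g)) k.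
Proof. by rewrite -comp_assocr -fmap_comp. Qed.

Lemma Xm_comp l m n (f : DHom m n) (g : DHom l m) : comp (Xm f) (Xm g) = Xm (dcomp f g).
Proof. by rewrite -fmap_comp. Qed.

Lemma Xm_did n : Xm (did n) = idm _.
Proof. exact: (fmap_id (hX X) n). Qed.

Lemma xi_dsum_p1 m n m' n' d (f : DHom m n) (g : DHom m' n') (k : hom d _) :
  comp (p1 _ _) (comp (x n n') (comp (Xm (dsum f g)) k))
  = comp (Xm f) (comp (p1 _ _) (comp (x m m') k)).
Proof. by rewrite -(comp_assocr (x n n')) xi_nat comp_assocr tensor_p1_comp. Qed.

Lemma xi_dsum_p2 m n m' n' d (f : DHom m n) (g : DHom m' n') (k : hom d _) :
  comp (p2 _ _) (comp (x n n') (comp (Xm (dsum f g)) k))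
  = comp (Xm g) (comp (p2 _ _) (comp (x m m') k)).
Proof. by rewrite -(comp_assocr (x n n')) xi_nat comp_assocr tensor_p2_comp. Qed.

Lemma xi_coassoc_left l m n d (k : hom d _) :
  comp (p1 _ _) (comp (x l m) (comp (p1 _ _) (comp (x (l + m) n) k)))
  = comp (p1 _ _) (comp (x l (m + n)) (comp (Xm (dcast (esym (addnA l m n)))) k)).
Proof.
have := congr1 (fun h => comp (p1 _ _) (comp h k)) (xi_coassoc X l m n).
by rewrite /= !comp_assocr assoc_p1_comp !tensor_p1_comp comp_id_l.
Qed.

Lemma xi_coassoc_middle l m n d (k : hom d _) :
  comp (p2 _ _) (comp (x l m) (comp (p1 _ _) (comp (x (l + m) n) k)))
  = comp (p1 _ _) (comp (x m n) (comp (p2 _ _) (comp (x l (m + n))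
       (comp (Xm (dcast (esym (addnA l m n)))) k)))).
Proof.
have := congr1 (fun h => comp (p1 _ _) (comp (p2 _ _) (comp h k))) (xi_coassoc X l m n).
by rewrite /= !comp_assocr assoc_p2_comp pair_p1_comp !comp_assocr tensor_p1_comp tensor_p2_comp.
Qed.

Lemma xi_coassoc_right l m n d (k : hom d _) :
  comp (p2 _ _) (comp (x (l + m) n) k)
  = comp (p2 _ _) (comp (x m n) (comp (p2 _ _) (comp (x l (m + n))
       (comp (Xm (dcast (esym (addnA l m n)))) k)))).
Proof.
have := congr1 (fun h => comp (p2 _ _) (comp (p2 _ _) (comp h k))) (xi_coassoc X l m n).
by rewrite /= !comp_assocr assoc_p2_comp pair_p2_comp !tensor_p2_comp comp_id_l.
Qed.

Lemma xi_counit_l_p2 n d (k : hom d _) : comp (p2 _ _) (comp (x 0 n) k) = k.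
Proof.
have := congr1 (fun h => comp (p2 _ _) (comp h k)) (xi_counit_l X n).
by rewrite /= !comp_assocr tensor_p2_comp comp_id_l /lunit_inv pair_p2_comp comp_id_l.
Qed.

Lemma xi_counit_r_p1 n d (k : hom d _) :
  comp (p1 _ _) (comp (x n 0) k) = comp (Xm (dcast (addn0 n))) k.
Proof.
have := congr1 (fun h => comp (p1 _ _) (comp h k)) (xi_counit_r X n).
by rewrite /= !comp_assocr tensor_p1_comp comp_id_l /runit_inv pair_p1_comp comp_id_l.
Qed.

(* Locked, so that rewrite patterns headed by [comp] do not match inside it. *)
Definition xi_mid m : hom (hX X (1 + (m + 1))) (hX X m) :=
  locked (comp (p1 _ _) (comp (x m 1) (comp (p2 _ _) (x 1 (m + 1))))).

Lemma xi_mid_dsum a m c m' d (f : DHom m' m) (k : hom d _) :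
  comp (xi_mid m) (comp (Xm (dsum (dconst0 a) (dsum f (dconst0 c)))) k)
  = comp (Xm f) (comp (p1 _ _) (comp (x m' c) (comp (p2 _ _) (comp (x a (m' + c)) k)))).
Proof. by rewrite /xi_mid -!lock !comp_assocr xi_dsum_p2 xi_dsum_p1. Qed.

Lemma xi_mid_dsum0 m c m' d (f : DHom m' m) (k : hom d _) :
  comp (xi_mid m) (comp (Xm (dsum (dconst0 0) (dsum f (dconst0 c)) : DHom (m' + c) _)) k)
  = comp (Xm f) (comp (p1 _ _) (comp (x m' c) k)).
Proof. by have := @xi_mid_dsum 0 m c m' d f k; rewrite xi_counit_l_p2. Qed.

Lemma xi_mid_mid c d (k : hom d _) :
  comp (xi_mid c) (comp (xi_mid (1 + (c + 1))) k)
  = comp (xi_mid c) (comp (Xm (dcollapse c)) k).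
Proof.
rewrite /xi_mid -!lock !comp_assocr.
rewrite xi_coassoc_middle dcast_id Xm_did comp_id_l xi_coassoc_left.
rewrite /dcollapse -Xm_comp_r xi_dsum_p2 -Xm_comp_r xi_dsum_p1 Xm_did comp_id_l.
by rewrite xi_dsum_p2 Xm_did comp_id_l xi_coassoc_right dcast_id Xm_did comp_id_l.
Qed.

End HomotopyMonoid.

Section SegalMap.
Variables (M : CartEqCat) (Y : Functor (opCat DeltaPlus) M).
Variable split1 : forall n, hom (Y (1 + n)) (prod (Y 1) (Y n)).
Local Notation Ym g := (fmap Y (g : @hom (opCat DeltaPlus) _ _)).

Fixpoint segal_rec (n : nat) : hom (Y n) (pow (Y 1) n) :=
  if n is n'.+1 then comp (tensor (idm _) (segal_rec n')) (split1 n') else bang _.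

Hypothesis split1_p1 : forall n, comp (p1 _ _) (split1 n) = Ym (alpha1 1 n).
Hypothesis split1_p2 : forall n, comp (p2 _ _) (split1 n) = Ym (alpha2 1 n).

Lemma segal_mapE n : segal_map Y n = segal_rec n.
Proof.
elim: n => [|n IH] //=.
rewrite /tensor comp_pair !comp_assocr comp_id_l split1_p1 -IH /segal_map tuple_map_comp /=.
rewrite beta_ord0; congr (pair _ _); congr (tuple_map _); apply: functional_extensionality => j.
by rewrite split1_p2 -fmap_comp beta_lift.
Qed.

Lemma segal_rec_equiv :
  equiv (bang (Y 0)) -> (forall n, equiv (split1 n)) -> forall n, equiv (segal_rec n).
Proof.
move=> bang_eqv split1_eqv; elim => [|n IH] //=.
by apply: equiv_2of3_comp => //; apply: equiv_tensor => //; apply/equiv_iso/iso_idm.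
Qed.

Lemma split1_equiv : (forall n, equiv (segal_rec n)) -> forall n, equiv (split1 n).
Proof.
move=> segal_eqv n; apply: (@equiv_2of3_right _ _ _ _ _ (tensor (idm _) (segal_rec n))).
- by apply: equiv_tensor => //; apply/equiv_iso/iso_idm.
- exact: (segal_eqv n.+1).
Qed.

End SegalMap.

Section ToSpecial.
Variables (M : CartEqCat) (X : HtyObj M).
Local Notation Xm f := (fmap (hX X) (f : @hom Delta _ _)).

Definition simplicial_map a b (g : DHom b.+1 a.+1) : hom (hX X a) (hX X b) :=
  comp (xi_mid X b) (Xm (flat g)).

Lemma simplicial_map_did a : simplicial_map (did a.+1) = idm _.
Proof.
rewrite /simplicial_map flat_did -Xm_comp xi_mid_dsum xi_counit_l_p2 xi_counit_r_p1.
by rewrite Xm_did comp_id_l Xm_comp dcast_addn0K Xm_did.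
Qed.

Lemma simplicial_map_dcomp a b c (f : DHom b.+1 a.+1) (g : DHom c.+1 b.+1) :
  simplicial_map (dcomp f g) = comp (simplicial_map g) (simplicial_map f).
Proof.
rewrite /simplicial_map flat_dcomp -(Xm_comp X (dcollapse c)) -xi_mid_mid.
rewrite -(Xm_comp X (dsum (did 1) _)) /xi_mid -!lock !comp_assocr.
by rewrite xi_dsum_p2 xi_dsum_p1.
Qed.

Lemma simplicial_map_alpha1 m n : simplicial_map (alpha1 m n) = comp (p1 _ _) (xi X m n).
Proof.
rewrite /simplicial_map flat_alpha1 -[comp (xi_mid X m) _]comp_id_r !comp_assocr.
by rewrite xi_mid_dsum0 Xm_did comp_id_l comp_id_r.
Qed.

Lemma simplicial_map_alpha2 m n : simplicial_map (alpha2 m n) = comp (p2 _ _) (xi X m n).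
Proof.
rewrite /simplicial_map flat_alpha2 -Xm_comp xi_mid_dsum xi_counit_r_p1 Xm_did comp_id_l.
rewrite -[RHS]comp_id_r -(Xm_did X (m + n)) did_addn0_split -Xm_comp !comp_assocr.
by rewrite xi_dsum_p2.
Qed.

Program Definition simplicial_functor : Functor (opCat DeltaPlus) M :=
  {| fob := fun n => hX X n;
     fmap := fun a b (g : @hom (opCat DeltaPlus) a b) => simplicial_map g |}.
Next Obligation. exact: simplicial_map_did. Qed.
Next Obligation. exact: simplicial_map_dcomp. Qed.

Lemma simplicial_functor_special n : equiv (segal_map simplicial_functor n).
Proof.
rewrite (@segal_mapE M simplicial_functor (fun n => xi X 1 n)).
- apply: segal_rec_equiv; last by move=> k; apply: xi_equiv.
  by rewrite -(bang_uniq (xi0 X)); apply: xi0_equiv.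
- by move=> k /=; rewrite simplicial_map_alpha1.
- by move=> k /=; rewrite simplicial_map_alpha2.
Qed.

Definition to_special : SpObj M :=
  {| sY := simplicial_functor; special := simplicial_functor_special |}.

End ToSpecial.

Section ToSpecialFunctor.
Variable M : CartEqCat.

Lemma th_xi_p1 (X Y : HtyObj M) (s : HtyHom X Y) m n d (k : hom d _) :
  comp (th s m) (comp (p1 _ _) (comp (xi X m n) k))
  = comp (p1 _ _) (comp (xi Y m n) (comp (th s (m + n)) k)).
Proof.
by rewrite -(tensor_p1_comp _ (th s n)) -(comp_assocr (tensor _ _)) -th_mon !comp_assocr.
Qed.

Lemma th_xi_p2 (X Y : HtyObj M) (s : HtyHom X Y) m n d (k : hom d _) :
  comp (th s n) (comp (p2 _ _) (comp (xi X m n) k))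
  = comp (p2 _ _) (comp (xi Y m n) (comp (th s (m + n)) k)).
Proof.
by rewrite -(tensor_p2_comp (th s m)) -(comp_assocr (tensor _ _)) -th_mon !comp_assocr.
Qed.

Lemma th_xi_mid (X Y : HtyObj M) (s : HtyHom X Y) m d (k : hom d _) :
  comp (th s m) (comp (xi_mid X m) k) = comp (xi_mid Y m) (comp (th s (1 + (m + 1))) k).
Proof. by rewrite /xi_mid -!lock !comp_assocr th_xi_p1 th_xi_p2. Qed.

Program Definition to_special_hom (X Y : HtyObj M) (s : HtyHom X Y)
  : SpHom (to_special X) (to_special Y) := {| sth := fun n => th s n |}.
Next Obligation.
rewrite /simplicial_map -[comp (xi_mid X n) _]comp_id_r !comp_assocr th_xi_mid comp_id_r.
by rewrite th_nat.
Qed.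

Program Definition ToSpecial : Functor (HtyAlg M) (Special M) :=
  {| fob := @to_special M; fmap := fun X Y s => to_special_hom s |}.
Next Obligation. by apply: SpHom_ext. Qed.
Next Obligation. by apply: SpHom_ext. Qed.

End ToSpecialFunctor.

(** * From special simplicial objects to homotopy monoids *)

Section XiEquivFromXi1.
Variables (M : CartEqCat) (X : Functor Delta M).
Variables (x : forall m n : nat, hom (X (m + n)) (prod (X m) (X n))) (x0 : hom (X 0) one).
Hypothesis x_coassoc : forall l m n,
  comp (assoc _ _ _) (comp (tensor (x l m) (idm _)) (x (l + m) n))
  = comp (tensor (idm _) (x m n))
         (comp (x l (m + n)) (fmap X (dcast (esym (addnA l m n)) : @hom Delta _ _))).
Hypothesis x_counit_l : forall n, comp (tensor x0 (idm (X n))) (x 0 n) = lunit_inv (X n).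
Hypothesis x0_equiv : equiv x0.
Hypothesis x1_equiv : forall n, equiv (x 1 n).

Lemma fmap_dcast_iso m n (e : m = n) : is_iso (fmap X (dcast e : @hom Delta _ _)).
Proof.
exists (fmap X (dcast (esym e) : @hom Delta _ _)); split; rewrite -fmap_comp -fmap_id;
  congr (fmap X _); apply: DHom_dapp_ext => i lt_i /=;
  by rewrite dapp_dcomp ?dapp_dcast ?dapp_did //; case: _ / e lt_i.
Qed.

(* Coassociativity at l = 1 expresses x (1 + m) n through x 1 _ and x m n. *)
Lemma xi_equiv_from_xi1 m n : equiv (x m n).
Proof.
have idm_eqv a : equiv (idm a) by apply/equiv_iso/iso_idm.
elim: m n => [|m IH] n.
- apply: (@equiv_2of3_right _ _ _ _ _ (tensor x0 (idm _))); first exact: equiv_tensor.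
  by rewrite x_counit_l; apply/equiv_iso/lunit_inv_iso.
- have := x_coassoc 1 m n; rewrite -comp_assocr => coassoc1.
  apply: (@equiv_2of3_right _ _ _ _ _ (comp (assoc _ _ _) (tensor (x 1 m) (idm _)))).
  + apply: equiv_2of3_comp; first exact: equiv_tensor.
    exact/equiv_iso/assoc_iso.
  + rewrite coassoc1; apply: equiv_2of3_comp; last exact: equiv_tensor.
    by apply: equiv_2of3_comp => //; apply/equiv_iso/fmap_dcast_iso.
Qed.

End XiEquivFromXi1.

Section ToHty.
Variables (M : CartEqCat) (Y : SpObj M).
Local Notation Ym g := (fmap (sY Y) (g : @hom (opCat DeltaPlus) _ _)).

Lemma Ym_comp a b c (g : DHom b.+1 a.+1) (f : DHom c.+1 b.+1) :
  comp (Ym f) (Ym g) = Ym (dcomp g f).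
Proof. by rewrite -fmap_comp. Qed.

Lemma Ym_comp_r a b c d (g : DHom b.+1 a.+1) (f : DHom c.+1 b.+1) (k : hom d _) :
  comp (Ym f) (comp (Ym g) k) = comp (Ym (dcomp g f)) k.
Proof. by rewrite -comp_assocr Ym_comp. Qed.

Program Definition delta_functor : Functor Delta M :=
  {| fob := fun n => sY Y n; fmap := fun a b (f : @hom Delta a b) => Ym (ddual f) |}.
Next Obligation. by rewrite ddual_did; exact: (fmap_id (sY Y) a). Qed.
Next Obligation. by rewrite ddual_dcomp Ym_comp. Qed.

Definition segal_xi m n : hom (sY Y (m + n)) (prod (sY Y m) (sY Y n)) :=
  pair (Ym (alpha1 m n)) (Ym (alpha2 m n)).

Lemma segal_xi_nat m n m' n' (f : DHom m n) (g : DHom m' n') :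
  comp (segal_xi n n') (fmap delta_functor (dsum f g : @hom Delta _ _))
  = comp (tensor (fmap delta_functor (f : @hom Delta _ _))
                 (fmap delta_functor (g : @hom Delta _ _))) (segal_xi m m').
Proof.
by rewrite /segal_xi /= comp_pair tensor_pair !Ym_comp ddual_dsum_alpha1 ddual_dsum_alpha2.
Qed.

Lemma segal_xi_coassoc l m n :
  comp (assoc _ _ _) (comp (tensor (segal_xi l m) (idm _)) (segal_xi (l + m) n))
  = comp (tensor (idm _) (segal_xi m n))
         (comp (segal_xi l (m + n))
               (fmap delta_functor (dcast (esym (addnA l m n)) : @hom Delta _ _))).
Proof.
rewrite /segal_xi /= /assoc /tensor; apply: pair_ext; [|apply: pair_ext]; cart_simpl;
  rewrite ?Ym_comp ?Ym_comp_r; congr (fmap _ _); apply: DHom_dapp_ext => i lt_i;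
  rewrite !dapp_dcomp // ?dapp_alpha1 ?dapp_alpha2 ?ddual_dcast ?dapp_alpha1 ?dapp_alpha2; lia.
Qed.

Lemma segal_xi_counit_l n :
  comp (tensor (bang (sY Y 0)) (idm (sY Y n))) (segal_xi 0 n) = lunit_inv (sY Y n).
Proof. by rewrite /segal_xi tensor_pair bang_comp comp_id_l alpha2_0n (fmap_id (sY Y) n). Qed.

Lemma segal_xi_counit_r n :
  comp (tensor (idm (sY Y n)) (bang (sY Y 0))) (segal_xi n 0)
  = comp (runit_inv (sY Y n)) (fmap delta_functor (dcast (addn0 n) : @hom Delta _ _)).
Proof.
rewrite /segal_xi tensor_pair bang_comp comp_id_l /runit_inv comp_pair comp_id_l.
by rewrite bang_comp alpha1_n0.
Qed.

Lemma segal_xi_equiv m n : equiv (segal_xi m n).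
Proof.
apply: (@xi_equiv_from_xi1 M delta_functor segal_xi (bang _)).
- exact: segal_xi_coassoc.
- exact: segal_xi_counit_l.
- exact: (special Y 0).
- apply: (@split1_equiv M (sY Y) (fun n => segal_xi 1 n)) => k.
  rewrite -segal_mapE; first exact: special.
  + by move=> j; rewrite /segal_xi pair_p1.
  + by move=> j; rewrite /segal_xi pair_p2.
Qed.

Definition to_hty : HtyObj M :=
  {| hX := delta_functor; xi := segal_xi; xi0 := bang (sY Y 0);
     xi_nat := segal_xi_nat; xi_coassoc := segal_xi_coassoc;
     xi_counit_l := segal_xi_counit_l; xi_counit_r := segal_xi_counit_r;
     xi0_equiv := special Y 0; xi_equiv := segal_xi_equiv |}.

End ToHty.

Program Definition to_hty_hom (M : CartEqCat) (Y Z : SpObj M) (t : SpHom Y Z)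
  : HtyHom (to_hty Y) (to_hty Z) := {| th := fun n => sth t n |}.
Next Obligation. exact: sth_nat. Qed.
Next Obligation. by rewrite /segal_xi comp_pair tensor_pair !sth_nat. Qed.
Next Obligation. exact: bang_comp. Qed.

Program Definition ToHty (M : CartEqCat) : Functor (Special M) (HtyAlg M) :=
  {| fob := @to_hty M; fmap := fun Y Z t => to_hty_hom t |}.
Next Obligation. by apply: HtyHom_ext. Qed.
Next Obligation. by apply: HtyHom_ext. Qed.

(** * The two constructions are mutually inverse *)

Lemma Build_Functor_eq (C D : Category) (o : C -> D) fm1 fm2 id1 comp1 id2 comp2 :
  fm1 = fm2 -> @Build_Functor C D o fm1 id1 comp1 = @Build_Functor C D o fm2 id2 comp2.
Proof.
move=> efm; subst fm2.
by rewrite (proof_irrelevance _ id1 id2) (proof_irrelevance _ comp1 comp2).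
Qed.

Lemma HtyObj_eq (M : CartEqCat) (A B : HtyObj M) (e : hX A = hX B) :
  JMeq (xi A) (xi B) -> JMeq (xi0 A) (xi0 B) -> A = B.
Proof.
case: A e => h x x0 a1 a2 a3 a4 a5 a6; case: B => h' x' x0' b1 b2 b3 b4 b5 b6 /= e.
subst h' => jx jx0; have ex := JMeq_eq jx; have ex0 := JMeq_eq jx0; subst x' x0'.
by f_equal; apply: proof_irrelevance.
Qed.

Lemma SpObj_eq (M : CartEqCat) (A B : SpObj M) : sY A = sY B -> A = B.
Proof.
case: A => h a; case: B => h' b /= e; subst h'.
by f_equal; apply: proof_irrelevance.
Qed.

Section Inverse.
Variable M : CartEqCat.

Lemma simplicial_map_ddual (X : HtyObj M) a b (f : DHom a b) :
  simplicial_map X (ddual f) = fmap (hX X) (f : @hom Delta _ _).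
Proof.
rewrite /simplicial_map flat_ddual -Xm_comp -comp_assocr.
by rewrite -/(simplicial_map X (did b.+1)) simplicial_map_did comp_id_l.
Qed.

Lemma to_specialK (X : HtyObj M) : to_hty (to_special X) = X.
Proof.
have e : hX (to_hty (to_special X)) = hX X.
  move: (simplicial_map_ddual X).
  case: X => [[o fm fi fc] x x0 ? ? ? ? ? ?] /= fmapE.
  apply: Build_Functor_eq; do 2!apply: functional_extensionality_dep => ?.
  by apply: functional_extensionality => f; exact: fmapE.
apply: (HtyObj_eq e).
- have exi : (xi (to_hty (to_special X)) : forall m n, hom (hX X (m + n)) (prod (hX X m) (hX X n)))
    = xi X.
    do 2!apply: functional_extensionality_dep => ?.
    by rewrite /= /segal_xi /= simplicial_map_alpha1 simplicial_map_alpha2 -pair_uniq.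
  by rewrite -exi.
- have exi0 : (xi0 (to_hty (to_special X)) : hom (hX X 0) one) = xi0 X := esym (bang_uniq _).
  by rewrite -exi0.
Qed.
Lemma simplicial_map_to_hty (Y : SpObj M) a b (g : DHom b.+1 a.+1) :
  simplicial_map (to_hty Y) g = fmap (sY Y) (g : @hom (opCat DeltaPlus) a b).
Proof.
rewrite /simplicial_map /xi_mid -lock /= /segal_xi !comp_assocr pair_p1_comp pair_p2_comp.
by rewrite -!fmap_comp /= ddual_flat.
Qed.

Lemma to_htyK (Y : SpObj M) : to_special (to_hty Y) = Y.
Proof.
apply: SpObj_eq; move: (simplicial_map_to_hty Y).
case: Y => [[o fm fi fc] sp] /= fmapE.
apply: Build_Functor_eq; do 2!apply: functional_extensionality_dep => ?.
by apply: functional_extensionality => g; exact: fmapE.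
Qed.

Lemma hom_cast_HtyAlg (a b a' b' : HtyAlg M) (ea : a = a') (eb : b = b')
  (s : hom a b) (t : hom a' b') : (forall n, JMeq (th s n) (th t n)) -> hom_cast ea eb s = t.
Proof.
by case: a' / ea t; case: b' / eb => t st; apply: HtyHom_ext => n; apply: JMeq_eq.
Qed.

Lemma hom_cast_Special (a b a' b' : Special M) (ea : a = a') (eb : b = b')
  (s : hom a b) (t : hom a' b') : (forall n, JMeq (sth s n) (sth t n)) -> hom_cast ea eb s = t.
Proof.
by case: a' / ea t; case: b' / eb => t st; apply: SpHom_ext => n; apply: JMeq_eq.
Qed.

End Inverse.

Theorem corollary3p1p9 (M : CartEqCat) : iso_of_categories (HtyAlg M) (Special M).
Proof.
exists (ToSpecial M), (ToHty M); split.
- by exists (@to_specialK M) => X Y s; apply: hom_cast_HtyAlg.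
- by exists (@to_htyK M) => X Y t; apply: hom_cast_Special.
Qed.
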